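(* Let $A$ and $B$ be cofinite directed posets of infinite height. Then the poset of strictly increasing functions $B\to A$, ordered by $\alpha'\geq\alpha$ iff $\alpha'(b)\geq\alpha(b)$ for all $b\in B$, is directed and of infinite height.
   Context: A poset is cofinite if for every $x$ the set $\{z\mid z\le x\}$ is finite; directed if it is nonempty and any two elements have a common upper bound; of infinite height if for every $a$ there is $a'$ with $a<a'$. *)

From mathcomp Require Import all_boot all_order.
Set Implicit Arguments. Unset Strict Implicit. Unset Printing Implicit Defensive.
Import Order.Theory.
Local Open Scope order_scope.

Definition cofinite_poset d (T : porderType d) : Prop :=
  forall x : T, exists s : seq T, forall z : T, z <= x -> z \in s.

(* Generic poset notions, stated for an arbitrary relation le (with strict
   order lt := le and not equal), so they can be applied to the pointwise
   order on functions. *)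
Definition directed_rel (X : Type) (le : X -> X -> Prop) : Prop :=
  (exists x : X, True) /\ forall x y : X, exists z : X, le x z /\ le y z.

Definition infinite_height_rel (X : Type) (le : X -> X -> Prop) : Prop :=
  forall a : X, exists a' : X, le a a' /\ a <> a'.

Definition directed_poset d (T : porderType d) : Prop :=
  directed_rel (fun x y : T => x <= y).

Definition infinite_height_poset d (T : porderType d) : Prop :=
  forall a : T, exists a' : T, a < a'.

Definition strictly_increasing dA dB (A : porderType dA) (B : porderType dB)
  (f : B -> A) : Prop := forall b b' : B, b < b' -> f b < f b'.

Definition incr_fun dA dB (A : porderType dA) (B : porderType dB) :=
  { f : B -> A | strictly_increasing f }.

Definition incr_le dA dB (A : porderType dA) (B : porderType dB)
  (f g : incr_fun A B) : Prop := forall b : B, proj1_sig f b <= proj1_sig g b.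

From mathcomp Require Import all_boot all_order.
From Stdlib Require ClassicalEpsilon.
Set Implicit Arguments.
Unset Strict Implicit.
Import Order.Theory.
Local Open Scope order_scope.

(* Since every strict down-set of B is finite, its size is a rank that
   strictly increases along <.  Define h by recursion on this rank: h b is a
   strict upper bound (which exists as A is directed without maximal elements)
   of the prescribed values at b together with all h z for z < b.  The
   recursion is realised by iterating the one-step construction from an
   arbitrary start; the iterates stabilise at b after rank b steps. *)

Lemma directed_strict_upper_bound dA (A : porderType dA) :
  directed_poset A -> infinite_height_poset A ->
  forall l : seq A, exists u, forall x, x \in l -> x < u.
Proof.
move=> [[a0 _] dirA] ihA.
have ub_seq (l : seq A) : exists u, forall x, x \in l -> x <= u.
  elim: l => [|x l [u ub_u]]; first by exists a0.
  have [z [xz uz]] := dirA x u.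
  exists z => y; rewrite inE => /predU1P [-> //|yl].
  exact: le_trans (ub_u _ yl) uz.
move=> l; have [u ub_u] := ub_seq l; have [u' uu'] := ihA u.
by exists u' => x /ub_u xu; apply: le_lt_trans xu uu'.
Qed.

Lemma cofinite_strict_downsets dB (B : porderType dB) :
  cofinite_poset B ->
  exists preds : B -> seq B, forall b z, (z \in preds b) = (z < b).
Proof.
move=> cofB; have [s sP] := ClassicalEpsilon.choice _ cofB.
exists (fun b => filter (< b) (s b)) => b z.
rewrite mem_filter; apply/andP/idP => [[] //|zb].
by split; last exact/sP/ltW.
Qed.

Section StrictlyIncreasingAbove.

Variables (dA dB : Order.disp_t) (A : porderType dA) (B : porderType dB).
Variable next : seq A -> A.
Hypothesis next_gt : forall l x, x \in l -> x < next l.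
Variable preds : B -> seq B.
Hypothesis mem_preds : forall b z, (z \in preds b) = (z < b).
Variable seed : B -> seq A.

Definition downset_rank (b : B) : nat := size (undup (preds b)).

Lemma downset_rank_lt z b : z < b -> (downset_rank z < downset_rank b)%N.
Proof.
move=> zb; apply: (@uniq_leq_size _ (z :: undup (preds z))).
  by rewrite /= undup_uniq andbT mem_undup mem_preds ltxx.
move=> y; rewrite inE !mem_undup !mem_preds => /predU1P [-> //|yz].
exact: lt_trans yz zb.
Qed.

Definition bump (k : B -> A) (b : B) : A := next (seed b ++ map k (preds b)).

Definition approx (n : nat) : B -> A := iter n bump (fun _ => next [::]).

Lemma approx_stable n m b :
  (downset_rank b < n)%N -> (downset_rank b < m)%N -> approx n b = approx m b.
Proof.
elim: n m b => [//|n IHn] [//|m] b /= bn bm.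
rewrite /bump; congr (next (_ ++ _)); apply/eq_in_map => z.
rewrite mem_preds => /downset_rank_lt zb.
by apply: IHn; [exact: leq_trans zb bn | exact: leq_trans zb bm].
Qed.

Definition above (b : B) : A := approx (downset_rank b).+1 b.

Lemma above_seed b x : x \in seed b -> x < above b.
Proof. by move=> xb; apply: next_gt; rewrite mem_cat xb. Qed.

Lemma above_incr : strictly_increasing above.
Proof.
move=> z b zb.
have -> : above z = approx (downset_rank b) z by apply: approx_stable => //; apply: downset_rank_lt.
by apply: next_gt; rewrite mem_cat map_f ?orbT ?mem_preds.
Qed.

End StrictlyIncreasingAbove.

Lemma strictly_increasing_above dA dB (A : porderType dA) (B : porderType dB) :
  directed_poset A -> infinite_height_poset A -> cofinite_poset B ->
  forall seed : B -> seq A, exists h : B -> A,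
    strictly_increasing h /\ forall b x, x \in seed b -> x < h b.
Proof.
move=> dirA ihA cofB seed.
have [next next_gt] :=
  ClassicalEpsilon.choice _ (directed_strict_upper_bound dirA ihA).
have [preds mem_preds] := cofinite_strict_downsets cofB.
exists (above next preds seed); split; first exact: above_incr.
exact: above_seed.
Qed.

Theorem lemma3p17 (dA dB : Order.disp_t) (A : porderType dA) (B : porderType dB) :
  cofinite_poset A -> directed_poset A -> infinite_height_poset A ->
  cofinite_poset B -> directed_poset B -> infinite_height_poset B ->
  directed_rel (@incr_le _ _ A B) /\ infinite_height_rel (@incr_le _ _ A B).
Proof.
move=> _ dirA ihA cofB [[b0 _] _] _.
have exists_above := strictly_increasing_above dirA ihA cofB.
split; [split|].
- have [h [h_incr _]] := exists_above (fun _ => [::]).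
  by exists (exist _ h h_incr).
- move=> [f f_incr] [g g_incr].
  have [h [h_incr h_gt]] := exists_above (fun b => [:: f b; g b]).
  by exists (exist _ h h_incr); split => b /=; apply/ltW/h_gt; rewrite !inE eqxx ?orbT.
- move=> [f f_incr].
  have [h [h_incr h_gt]] := exists_above (fun b => [:: f b]).
  have f_lt_h b : f b < h b by apply: h_gt; rewrite inE.
  exists (exist _ h h_incr); split => [b|[f_eq_h]]; first exact/ltW/f_lt_h.
  by have := f_lt_h b0; rewrite f_eq_h ltxx.
Qed.
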